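(* Let $X$ and $Y$ be nonempty sets with $\operatorname{card} Y\ge 3$, and let $\mathcal P$ be a nonempty collection of subsets of $X$. Define the binary relation $\hat{\mathcal P}$ on $Y^X$ by declaring $f\,\hat{\mathcal P}\,g$ if and only if $\{x\in X\mid f(x)=g(x)\}\in\mathcal P$. Then $\mathcal P$ is a filter on $X$ if and only if $\hat{\mathcal P}$ is a nontrivial equivalence relation on $Y^X$.
   Context: Let $X$ be a nonempty set. A nonempty collection $\mathcal P$ of subsets of $X$ is a filter on $X$ if it satisfies: (F0) for every $n\ge 1$ and all $A_1,\dots,A_n\in\mathcal P$, $A_1\cap\cdots\cap A_n\neq\emptyset$; (F1) if $A\supseteq B$ and $B\in\mathcal P$ then $A\in\mathcal P$; (F2) for all $A,B\in\mathcal P$ there is $C\in\mathcal P$ with $C\subseteq A\cap B$. $Y^X$ denotes the set of all functions $X\to Y$. An equivalence relation on a set $S$ is called nontrivial if it is not the total relation $S\times S$ (i.e. not all pairs of elements are related). *)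

From Stdlib Require Import List Relation_Definitions.
Import ListNotations.

Definition is_filter {X : Type} (P : (X -> Prop) -> Prop) : Prop :=
  (exists A, P A) /\
  (forall l : list (X -> Prop), l <> [] -> Forall P l ->
     exists x, Forall (fun A => A x) l) /\
  (forall A B : X -> Prop, (forall x, B x -> A x) -> P B -> P A) /\
  (forall A B : X -> Prop, P A -> P B ->
     exists C, P C /\ (forall x, C x -> A x /\ B x)).

Definition hatP {X Y : Type} (P : (X -> Prop) -> Prop) : relation (X -> Y) :=
  fun f g => P (fun x => f x = g x).

Definition nontrivial_rel {S : Type} (R : relation S) : Prop :=
  ~ (forall a b : S, R a b).

(* Agreement sets behave like intersections: if [y1], [y2], [y3] are distinct, the
   functions equal to [y1] on [A] (and [y2] elsewhere) and to [y1] on [B] (and [y3]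
   elsewhere) agree exactly on [A /\ B].  So transitivity and symmetry of the relation
   [hatP P] force [P] to be closed under binary meets and upward closed, reflexivity
   puts the full set in [P], and nontriviality keeps the empty set out of it. *)

From Stdlib Require Import List Relation_Definitions.
From Stdlib Require Import Classical ClassicalEpsilon FunctionalExtensionality PropExtensionality.
Import ListNotations.

Section FilterRelation.

Context {X Y : Type}.
Implicit Types (P : (X -> Prop) -> Prop) (A B C : X -> Prop).

Lemma mem_iff P A B : (forall x, A x <-> B x) -> P A -> P B.
Proof.
  intros HAB HA. replace B with A; [exact HA|].
  apply functional_extensionality; intro x; apply propositional_extensionality; auto.
Qed.

Lemma filter_hatP_equivalence P : is_filter P -> equivalence (X -> Y) (hatP P).
Proof.
  intros ([A HA] & _ & F1 & F2). split.
  - intro f. exact (F1 _ A (fun x _ => eq_refl) HA).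
  - intros f g h Hfg Hgh.
    destruct (F2 _ _ Hfg Hgh) as (C & HC & HCfgh).
    apply (F1 _ C); [|exact HC].
    intros x Hx. destruct (HCfgh x Hx). congruence.
  - intros f g Hfg. exact (F1 _ _ (fun x H => eq_sym H) Hfg).
Qed.

Lemma filter_hatP_nontrivial P {y1 y2 : Y} :
  y1 <> y2 -> is_filter P -> nontrivial_rel (@hatP X Y P).
Proof.
  intros h12 (_ & F0 & _) Htotal.
  destruct (F0 [fun _ => y1 = y2]) as [x Hx].
  - discriminate.
  - constructor; [exact (Htotal (fun _ => y1) (fun _ => y2)) | constructor].
  - inversion Hx; auto.
Qed.

Definition indicator A (y y' : Y) (x : X) : Y :=
  if excluded_middle_informative (A x) then y else y'.

Lemma indicator_agree_iff (y1 y2 y3 : Y) A B x :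
  y1 <> y2 -> y1 <> y3 -> y2 <> y3 ->
  indicator A y1 y2 x = indicator B y1 y3 x <-> A x /\ B x.
Proof.
  intros h12 h13 h23. unfold indicator.
  destruct (excluded_middle_informative (A x)), (excluded_middle_informative (B x));
    split; intros; try tauto; congruence.
Qed.

Lemma forall_list_meet_closed P :
  (forall A B, P A -> P B -> P (fun x => A x /\ B x)) ->
  forall l, l <> [] -> Forall P l -> P (fun x => Forall (fun A => A x) l).
Proof.
  intros Pmeet l. induction l as [|A [|B l] IH]; intros Hl Hmem; [congruence| |].
  - apply (mem_iff P A); [|now inversion Hmem].
    intro x; split; intro H; [now constructor | now inversion H].
  - inversion Hmem; subst.
    apply (mem_iff P (fun x => A x /\ Forall (fun A => A x) (B :: l))).
    + intro x; split; intro H; [now constructor | now inversion H].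
    + apply Pmeet; [assumption | apply IH; [discriminate | assumption]].
Qed.

Section FromEquivalence.

Context {P : (X -> Prop) -> Prop} {y1 y2 y3 : Y}.
Hypotheses (h12 : y1 <> y2) (h13 : y1 <> y3) (h23 : y2 <> y3).
Hypothesis hatP_equiv : equivalence (X -> Y) (hatP P).

Let u A := indicator A y1 y2.
Let v B := indicator B y1 y3.
Let T : X -> Prop := fun _ => True.

Lemma hatP_indicator_iff A B : hatP P (u A) (v B) <-> P (fun x => A x /\ B x).
Proof.
  split; apply mem_iff; intro x; [|symmetry];
    exact (indicator_agree_iff y1 y2 y3 A B x h12 h13 h23).
Qed.

Lemma mem_full : P T.
Proof.
  apply (mem_iff P (fun x => y1 = y1)); [unfold T; firstorder|].
  exact (equiv_refl _ _ hatP_equiv (fun _ => y1)).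
Qed.

(* A zigzag [u A ~ v B ~ u C ~ v D] of indicator functions; with [T] in the right
   places it yields both meets and upward closure. *)
Lemma mem_zigzag A B C D :
  P (fun x => A x /\ B x) -> P (fun x => C x /\ B x) -> P (fun x => C x /\ D x) ->
  P (fun x => A x /\ D x).
Proof.
  destruct hatP_equiv as [_ Htrans Hsym].
  intros HAB HCB HCD. apply hatP_indicator_iff.
  apply (Htrans _ (v B)); [now apply hatP_indicator_iff|].
  apply (Htrans _ (u C)); [now apply Hsym, hatP_indicator_iff|].
  now apply hatP_indicator_iff.
Qed.

Lemma mem_meet A B : P A -> P B -> P (fun x => A x /\ B x).
Proof.
  intros HA HB. apply (mem_zigzag A T T B).
  - apply (mem_iff P A); [firstorder | exact HA].
  - apply (mem_iff P T); [firstorder | exact mem_full].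
  - apply (mem_iff P B); [firstorder | exact HB].
Qed.

Lemma mem_upward A B : (forall x, B x -> A x) -> P B -> P A.
Proof.
  intros HBA HB.
  apply (mem_iff P (fun x => A x /\ T x)); [firstorder|].
  apply (mem_zigzag A B T T).
  - apply (mem_iff P B); [firstorder | exact HB].
  - apply (mem_iff P B); [firstorder | exact HB].
  - apply (mem_iff P T); [firstorder | exact mem_full].
Qed.

Lemma mem_nonempty : nontrivial_rel (@hatP X Y P) -> forall C, P C -> exists x, C x.
Proof.
  intros Hnt C HC. apply NNPP; intro Hempty. apply Hnt; intros f g.
  apply (mem_upward _ C); [|exact HC].
  intros x Hx. exfalso. eauto.
Qed.

End FromEquivalence.

End FilterRelation.

Theorem mainTheorem1 (X Y : Type) (hX : inhabited X)
  (hY : exists y1 y2 y3 : Y, y1 <> y2 /\ y1 <> y3 /\ y2 <> y3)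
  (P : (X -> Prop) -> Prop) (hP : exists A, P A) :
  is_filter P <->
  (equivalence (X -> Y) (hatP P) /\ nontrivial_rel (@hatP X Y P)).
Proof.
  destruct hY as (y1 & y2 & y3 & h12 & h13 & h23).
  split.
  - intro HF. split.
    + exact (filter_hatP_equivalence P HF).
    + exact (filter_hatP_nontrivial P h12 HF).
  - intros [Hequiv Hnt].
    pose proof (mem_meet h12 h13 h23 Hequiv) as Hmeet.
    split; [exact hP|]. split; [|split].
    + intros l Hl Hmem.
      exact (mem_nonempty h12 h13 h23 Hequiv Hnt _ (forall_list_meet_closed P Hmeet l Hl Hmem)).
    + exact (mem_upward h12 h13 h23 Hequiv).
    + intros A B HA HB. exists (fun x => A x /\ B x). auto.
Qed.
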